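(* Let $A\in\mathbb{C}^{n\times n}$ with $ind(A)=k$, fix $A^-\in A\{1\}$ and $A^{GD}\in A\{GD\}$, and let $A^{GD1}=A^{GD}AA^-$. Then: (i) there exist idempotent matrices $M,N\in\mathbb{C}^{n\times n}$ such that $A^kA^{-}M=0$, $MA^k=0$, $NA^kA^{-}=0$, $A^kN=0$; (ii) there exists a matrix $X\in\mathbb{C}^{n\times n}$ such that $$\mathrm{rank}\begin{bmatrix} A & I-M\\ I-N & X\end{bmatrix}=\mathrm{rank}(A).$$ Moreover, these hold with $M=I-AA^{GD1}$, $N=I-A^{GD1}A$, and $X=A^{GD1}$.
   Context: For $A\in\mathbb{C}^{n\times n}$, $ind(A)$ is the smallest nonnegative integer $k$ with $\mathrm{rank}(A^k)=\mathrm{rank}(A^{k+1})$; $A^0=I$. $A\{1\}$ is the set of matrices $X$ with $AXA=A$. $A\{GD\}$ is the set of G-Drazin inverses of $A$: matrices $X$ with $AXA=A$, $XA^{k+1}=A^k$, $A^{k+1}X=A^k$. *)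

(* Complex matrices: 'M[R[i]]_n with R : realType, so R[i] is C. *)
From HB Require Import structures.
From mathcomp Require Import all_boot all_order all_algebra.
From mathcomp Require Import complex.
From mathcomp Require Import reals.
Set Implicit Arguments. Unset Strict Implicit. Unset Printing Implicit Defensive.
Import Order.TTheory GRing.Theory Num.Theory.
Local Open Scope ring_scope.

Definition mxpow (F : fieldType) (n : nat) (A : 'M[F]_n) (k : nat) : 'M[F]_n :=
  iter k (mulmx A) 1%:M.

Definition is_index (F : fieldType) (n : nat) (A : 'M[F]_n) (k : nat) : Prop :=
  \rank (mxpow A k) = \rank (mxpow A k.+1) /\
  forall j, (j < k)%N -> \rank (mxpow A j) <> \rank (mxpow A j.+1).

Definition inner_inverse (F : fieldType) (n : nat) (A X : 'M[F]_n) : Prop :=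
  A *m X *m A = A.

Definition GD_inverse (F : fieldType) (n : nat) (A X : 'M[F]_n) (k : nat) : Prop :=
  A *m X *m A = A /\ X *m mxpow A k.+1 = mxpow A k /\ mxpow A k.+1 *m X = mxpow A k.

Definition idempotent_mx (F : fieldType) (n : nat) (M : 'M[F]_n) : Prop :=
  M *m M = M.

Definition thm_props (F : fieldType) (n k : nat) (A Am M N X : 'M[F]_n) : Prop :=
  (idempotent_mx M /\ idempotent_mx N /\
   mxpow A k *m Am *m M = 0 /\ M *m mxpow A k = 0 /\
   N *m mxpow A k *m Am = 0 /\ mxpow A k *m N = 0) /\
  \rank (block_mx A (1%:M - M) (1%:M - N) X) = \rank A.

(* With P := A A^- and Q := A^GD A, both idempotent because A^- and A^GD are
   inner inverses, one has A A^GD1 = P and A^GD1 A = Q, so M = I - P and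
   N = I - Q.  The GD equations A^GD A^(k+1) = A^k = A^(k+1) A^GD exhibit A^k
   as a left and as a right multiple of A, and inner inverses fix such
   multiples (A^k A^- A = A^k, A A^- A^k = A^k, ...), which gives the four
   annihilation identities.  The block matrix [A P; Q A^GD1] factors as
   [I; A^GD] A [I A^-] and contains A as a corner, so its rank is rank A. *)
From HB Require Import structures.
From mathcomp Require Import all_boot all_order all_algebra.
From mathcomp Require Import complex.
From mathcomp Require Import reals.
Set Implicit Arguments. Unset Strict Implicit. Unset Printing Implicit Defensive.
Import Order.TTheory GRing.Theory Num.Theory.
Local Open Scope ring_scope.

Lemma mxpowSr (F : fieldType) n (A : 'M[F]_n) k :
  mxpow A k.+1 = mxpow A k *m A.
Proof.
elim: k => [|k IH]; first by rewrite /mxpow /= mulmx1 mul1mx.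
by rewrite -[LHS]/(A *m mxpow A k.+1) {1}IH mulmxA.
Qed.

Lemma idempotent_mx_compl (F : fieldType) n (P : 'M[F]_n) :
  idempotent_mx P -> idempotent_mx (1%:M - P).
Proof.
rewrite /idempotent_mx => hP.
by rewrite mulmxBl !mulmxBr !mul1mx mulmx1 hP subrr subr0.
Qed.

Section InnerInverse.

Variables (F : fieldType) (n : nat) (A X : 'M[F]_n).
Hypothesis hX : inner_inverse A X.

Lemma inner_inverse_idem_AX : idempotent_mx (A *m X).
Proof. by rewrite /idempotent_mx mulmxA hX. Qed.

Lemma inner_inverse_idem_XA : idempotent_mx (X *m A).
Proof. by rewrite /idempotent_mx -mulmxA (mulmxA A) hX. Qed.

Lemma inner_inverse_fix_lmul (B Y : 'M[F]_n) : B = Y *m A -> B *m X *m A = B.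
Proof. by move->; rewrite -!mulmxA (mulmxA A) hX. Qed.

Lemma inner_inverse_fix_rmul (B Y : 'M[F]_n) : B = A *m Y -> A *m X *m B = B.
Proof. by move->; rewrite mulmxA hX. Qed.

End InnerInverse.

Lemma rank_block_factor (F : fieldType) m p q r (A : 'M[F]_(m, p))
    (U : 'M[F]_(q, m)) (V : 'M[F]_(p, r)) :
  \rank (block_mx A (A *m V) (U *m A) (U *m A *m V)) = \rank A.
Proof.
apply/eqP; rewrite eqn_leq; apply/andP; split.
  have -> : block_mx A (A *m V) (U *m A) (U *m A *m V)
      = col_mx 1%:M U *m A *m row_mx 1%:M V.
    by rewrite mul_col_mx mul1mx mul_col_mx !mul_mx_row !mulmx1.
  exact: leq_trans (mxrankM_maxl _ _) (mxrankM_maxr _ _).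
have {1}-> : A = row_mx 1%:M 0 *m block_mx A (A *m V) (U *m A) (U *m A *m V)
    *m col_mx 1%:M 0.
  by rewrite mul_row_block mul_row_col !mul1mx !mul0mx !addr0 mulmx1 mulmx0 addr0.
exact: leq_trans (mxrankM_maxl _ _) (mxrankM_maxr _ _).
Qed.

Lemma GD1_thm_props (F : fieldType) n k (A Am G : 'M[F]_n) :
  inner_inverse A Am -> GD_inverse A G k ->
  thm_props k A Am (1%:M - A *m (G *m A *m Am)) (1%:M - G *m A *m Am *m A)
    (G *m A *m Am).
Proof.
move=> hAm [hG [hGl hGr]].
have -> : A *m (G *m A *m Am) = A *m Am by rewrite !mulmxA hG.
have -> : G *m A *m Am *m A = G *m A by rewrite -!mulmxA (mulmxA A Am) hAm.
have kl : mxpow A k = G *m mxpow A k *m A by rewrite -mulmxA -mxpowSr hGl.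
have kr : mxpow A k = A *m (mxpow A k *m G).
  by rewrite mulmxA -[A *m _]/(mxpow A k.+1) hGr.
have GAk : G *m A *m mxpow A k = mxpow A k.
  by rewrite -mulmxA -[A *m _]/(mxpow A k.+1) hGl.
split; last by rewrite !subKr rank_block_factor.
split; first exact/idempotent_mx_compl/inner_inverse_idem_AX.
split; first exact/idempotent_mx_compl/inner_inverse_idem_XA.
split; first by rewrite mulmxBr mulmx1 mulmxA (inner_inverse_fix_lmul hAm kl) subrr.
split; first by rewrite mulmxBl mul1mx (inner_inverse_fix_rmul hAm kr) subrr.
split; first by rewrite mulmxBl mul1mx GAk subrr mul0mx.
by rewrite mulmxBr mulmx1 mulmxA (@inner_inverse_fix_lmul _ _ _ G hG _ _ kl) subrr.
Qed.

Theorem theorem2p9 (R : realType) (n k : nat) (A Am AGD : 'M[R[i]]_n) :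
  is_index A k -> inner_inverse A Am -> GD_inverse A AGD k ->
  let AGD1 := AGD *m A *m Am in
  (exists M N X : 'M[R[i]]_n, thm_props k A Am M N X) /\
  thm_props k A Am (1%:M - A *m AGD1) (1%:M - AGD1 *m A) AGD1.
Proof.
move=> _ hAm hAGD AGD1.
have props := GD1_thm_props hAm hAGD.
split; last exact: props.
by exists (1%:M - A *m AGD1), (1%:M - AGD1 *m A), AGD1.
Qed.
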